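(* Let $\mathcal{H}$ be finite-dimensional with Hamiltonian $H$, $\mathcal{C}=\{P_i\}$ nonzero mutually orthogonal projectors summing to $I$, $V_i=\mathrm{tr}[P_i]$, $\rho$ a density operator, $p_i=\mathrm{tr}[P_i\rho]$, $\rho_{\mathrm{cg}}=\sum_i\frac{p_i}{V_i}P_i$. Define $$W_{\mathcal{C}}^B(\rho)=\mathrm{tr}[H\rho]-\sum_ip_i\min_U\mathrm{tr}[HU(P_i/V_i)U^\dagger],\qquad W_{\mathcal{C}}(\rho)=\mathrm{tr}[H\rho]-\min_U\mathrm{tr}[HU\rho_{\mathrm{cg}}U^\dagger],$$ and, assuming there exist $\beta,\beta'\in(0,\infty)$ with $S_{\mathrm{vN}}(\rho_\beta)=\sum_ip_i\ln V_i$ and $S_{\mathrm{vN}}(\rho_{\beta'})=-\sum_ip_i\ln p_i+\sum_ip_i\ln V_i$ (where $\rho_\gamma=e^{-\gamma H}/\mathrm{tr}[e^{-\gamma H}]$), define $W_{\mathcal{C}}^{B\infty}(\rho)=\mathrm{tr}[H(\rho-\rho_\beta)]$ and $W_{\mathcal{C}}^{\infty}(\rho)=\mathrm{tr}[H(\rho-\rho_{\beta'})]$. Then $$W_{\mathcal{C}}(\rho)\le W^B_{\mathcal{C}}(\rho)\le W^{B\infty}_{\mathcal{C}}(\rho)\quad\text{and}\quad W_{\mathcal{C}}(\rho)\le W^{\infty}_{\mathcal{C}}(\rho)\le W^{B\infty}_{\mathcal{C}}(\rho).$$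
   Context: Minima are over unitaries $U$ on $\mathcal{H}$; $S_{\mathrm{vN}}(\sigma)=-\mathrm{tr}[\sigma\ln\sigma]$ with $0\ln0=0$. $W^B_{\mathcal{C}}$ is called the Boltzmann ergotropy, $W_{\mathcal{C}}$ the observational ergotropy, and $W^{B\infty}_{\mathcal{C}}$, $W^{\infty}_{\mathcal{C}}$ their large-$N$ versions. *)

From mathcomp Require Import all_boot all_order all_algebra.
From mathcomp Require Import complex.
From mathcomp Require Import classical_sets reals sequences exp.
Set Implicit Arguments. Unset Strict Implicit. Unset Printing Implicit Defensive.
Import Order.TTheory GRing.Theory Num.Theory.
Local Open Scope ring_scope.
Local Open Scope sesquilinear_scope.

Section QDefs.
Variable R : realType.
Local Notation C := R[i].

Definition mxfun n (f : R -> R) (A : 'M[C]_n) : 'M[C]_n :=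
  invmx (spectralmx A)
  *m diag_mx (map_mx (fun z : C => (f (complex.Re z))%:C%C) (spectral_diag A))
  *m spectralmx A.

(* real part of the trace (expectation values / traces of Hermitian ops) *)
Definition rtr n (A : 'M[C]_n) : R := complex.Re (\tr A).

Definition mexp_neg n (gamma : R) (H : 'M[C]_n) : 'M[C]_n :=
  mxfun (fun x => expR (- (gamma * x))) H.
Definition gibbs n (gamma : R) (H : 'M[C]_n) : 'M[C]_n :=
  (\tr (mexp_neg gamma H))^-1 *: mexp_neg gamma H.

(* von Neumann entropy S(sigma) = - tr[sigma ln sigma]; ln 0 = 0 in
   mathcomp-analysis, so the convention 0 ln 0 = 0 holds *)
Definition SvN n (sigma : 'M[C]_n) : R := - rtr (sigma *m mxfun (@ln R) sigma).

Definition density n (rho : 'M[C]_n) : Prop :=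
  [/\ rho \is hermsymmx, \tr rho = 1 &
      forall v : 'rV[C]_n, 0 <= (v *m rho *m v ^t*) 0 0].

Definition coarse_graining n m (P : 'I_m -> 'M[C]_n) : Prop :=
  [/\ forall i, P i \is hermsymmx,
      forall i, P i *m P i = P i,
      forall i, P i != 0,
      forall i j, i != j -> P i *m P j = 0 &
      \sum_(i < m) P i = 1%:M].

(* min_U tr[H U A U^dagger] over unitaries (the minimum exists; we use the infimum) *)
Definition min_unitary n (H A : 'M[C]_n) : R :=
  inf [set x : R | exists U : 'M[C]_n, U \is unitarymx /\ x = rtr (H *m (U *m A *m U ^t*))].

Definition Vol n m (P : 'I_m -> 'M[C]_n) (i : 'I_m) : R := rtr (P i).
Definition prob n m (P : 'I_m -> 'M[C]_n) (rho : 'M[C]_n) (i : 'I_m) : R := rtr (P i *m rho).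

Definition rho_cg n m (P : 'I_m -> 'M[C]_n) (rho : 'M[C]_n) : 'M[C]_n :=
  \sum_(i < m) (prob P rho i / Vol P i)%:C%C *: P i.

Definition W_B n m (H : 'M[C]_n) (P : 'I_m -> 'M[C]_n) (rho : 'M[C]_n) : R :=
  rtr (H *m rho) - \sum_(i < m) prob P rho i * min_unitary H ((Vol P i)^-1%:C%C *: P i).

Definition W_obs n m (H : 'M[C]_n) (P : 'I_m -> 'M[C]_n) (rho : 'M[C]_n) : R :=
  rtr (H *m rho) - min_unitary H (rho_cg P rho).

Definition W_Binf n (H : 'M[C]_n) (beta : R) (rho : 'M[C]_n) : R :=
  rtr (H *m (rho - gibbs beta H)).
Definition W_inf n (H : 'M[C]_n) (beta' : R) (rho : 'M[C]_n) : R :=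
  rtr (H *m (rho - gibbs beta' H)).

End QDefs.

From mathcomp Require Import all_boot all_order all_algebra.
From mathcomp Require Import complex.
From mathcomp Require Import classical_sets reals sequences exp.
From mathcomp Require Import ring lra.
Import Order.TTheory GRing.Theory Num.Theory.
Local Open Scope ring_scope.
Local Open Scope sesquilinear_scope.
Set Implicit Arguments. Unset Strict Implicit. Unset Printing Implicit Defensive.

(* Everything reduces to four comparisons of energies, all consequences of the
   Gibbs variational principle  beta tr[H sigma] - S(sigma) >= -ln Z_beta, which
   is Klein's inequality once sigma and the Gibbs state are written in their
   eigenbases (the squared overlaps of two orthonormal bases form a doubly
   stochastic matrix).  A rotated cell state U (P_i/V_i) U^+ has entropy ln V_i
   and the rotated coarse-grained state has entropy -sum_i p_i ln (p_i/V_i), so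
   the entropy conditions fixing beta and beta' turn the principle into
   E(rho_beta) <= sum_i p_i min_U tr[H U (P_i/V_i) U^+] and
   E(rho_beta') <= min_U tr[H U rho_cg U^+].  Linearity of rho_cg in the cell
   states gives sum_i p_i min_i <= min_cg, and comparing the free energies of
   the two Gibbs states, whose entropies satisfy S(rho_beta) <= S(rho_beta'),
   gives E(rho_beta) <= E(rho_beta'). *)

Lemma similar_diag_mx_map (F : fieldType) n (P W : 'M[F]_n) (e d : 'rV[F]_n)
    (f : F -> F) :
  P \in unitmx -> W \in unitmx ->
  invmx P *m diag_mx e *m P = invmx W *m diag_mx d *m W ->
  invmx P *m diag_mx (map_mx f e) *m P = invmx W *m diag_mx (map_mx f d) *m W.
Proof.
move=> uP uW ePW.
have intertwine (Q : 'M[F]_n) :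
    diag_mx e *m Q = Q *m diag_mx d ->
    diag_mx (map_mx f e) *m Q = Q *m diag_mx (map_mx f d).
  rewrite !mul_diag_mx !mul_mx_diag => /matrixP eQ; apply/matrixP => i j.
  have := eQ i j; rewrite !mxE.
  have [-> | nzQ] := eqVneq (Q i j) 0; first by rewrite !mulr0 !mul0r.
  by rewrite [e _ _ * _]mulrC => /(mulfI nzQ) ->; rewrite mulrC.
have /intertwine : diag_mx e *m (P *m invmx W) = P *m invmx W *m diag_mx d.
  have := congr1 (fun X => P *m X *m invmx W) ePW.
  by rewrite !mulmxA mulmxV // mul1mx -!mulmxA mulmxV // mulmx1 !mulmxA.
move=> /(congr1 (fun X => invmx P *m X *m W)).
by rewrite !mulmxA mulVmx // mul1mx -!mulmxA mulVmx // mulmx1 !mulmxA.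
Qed.

Lemma sum_pair (V : nmodType) (I J : finType) (F : I * J -> V) :
  \sum_t F t = \sum_i \sum_j F (i, j).
Proof. by rewrite pair_bigA; apply: eq_bigr => -[]. Qed.

Lemma sum_pair_cond (V : nmodType) (I J : finType) (S : I -> J -> bool) (F : I * J -> V) :
  \sum_(t | S t.1 t.2) F t = \sum_i \sum_(j | S i j) F (i, j).
Proof. by rewrite big_mkcond sum_pair; apply: eq_bigr => i _; rewrite [RHS]big_mkcond. Qed.

Section GibbsInequality.
Variable R : realType.

Lemma free_energy_le_shift (b E X S S' : R) : 0 < b ->
  b * E - S <= b * X - S' -> E + (S' - S) / b <= X.
Proof.
move=> b_gt0 F_le; rewrite -(ler_pM2l b_gt0) mulrDr mulrCA divff ?gt_eqF // mulr1.
lra.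
Qed.

Lemma sum_convex_shift (I : finType) (p l : I -> R) (E S b : R) : \sum_i p i = 1 ->
  \sum_i p i * (E + (l i - S) / b) = E + (\sum_i p i * l i - S) / b.
Proof.
move=> p_sum1; under eq_bigr => i _ do rewrite mulrDr mulrA mulrBr.
by rewrite big_split /= -mulr_suml p_sum1 mul1r -mulr_suml sumrB -mulr_suml p_sum1 mul1r.
Qed.

Lemma sum_mul_ln_div (I : finType) (p V : I -> R) :
  (forall i, 0 <= p i) -> (forall i, 0 < V i) ->
  \sum_i p i * ln (p i / V i) = \sum_i p i * ln (p i) - \sum_i p i * ln (V i).
Proof.
move=> p_ge0 V_gt0; rewrite -sumrB; apply: eq_bigr => i _.
have [-> | p_neq0] := eqVneq (p i) 0; first by rewrite !mul0r subrr.
have p_gt0 : 0 < p i by rewrite lt_def p_neq0 p_ge0.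
by rewrite ln_div ?posrE // mulrBr.
Qed.

Lemma sum_mul_ln_le0 (I : finType) (p : I -> R) : (forall i, 0 <= p i) -> \sum_i p i = 1 ->
  \sum_i p i * ln (p i) <= 0.
Proof.
move=> p_ge0 p_sum1; apply: sumr_le0 => i _; apply: mulr_ge0_le0 => //; apply: ln_le0.
by rewrite -p_sum1 (bigD1 i) //= lerDl sumr_ge0.
Qed.

Lemma sub_le_mul_lnB (a g : R) : 0 <= a -> 0 < g -> a - g <= a * ln a - a * ln g.
Proof.
move=> a_ge0 g_gt0; have [-> | a_neq0] := eqVneq a 0.
  by rewrite !mul0r subrr sub0r oppr_le0 ltW.
have a_gt0 : 0 < a by rewrite lt_def a_neq0.
have ln_le : ln (g / a) <= g / a - 1.
  by have := @le_ln1Dx R (g / a - 1); rewrite addrCA subrr addr0; apply;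
    rewrite ltrBrDl subrr divr_gt0.
have := ler_wpM2l (ltW a_gt0) ln_le.
by rewrite ln_div ?posrE // !mulrBr mulr1 mulrCA divff // mulr1; lra.
Qed.

(* Klein's inequality with a diagonal reference state: [c k t] is the squared
   overlap of the [k]-th reference eigenvector with the [t]-th eigenvector. *)
Lemma doubly_stochastic_gibbs_ineq (T : finType) n (c : 'I_n -> T -> R) (a : T -> R)
    (S : pred T) (g : 'I_n -> R) :
  (forall k t, 0 <= c k t) -> (forall t, 0 <= a t) -> (forall t, ~~ S t -> a t = 0) ->
  (forall k, 0 < g k) ->
  (forall t, S t -> \sum_k c k t = 1) -> (forall k, \sum_(t | S t) c k t = 1) ->
  \sum_t a t = 1 -> \sum_k g k = 1 ->
  \sum_t a t * \sum_k c k t * ln (g k) <= \sum_t a t * ln (a t).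
Proof.
move=> c_ge0 a_ge0 a_out g_gt0 c_col c_row a_sum1 g_sum1.
have restrictS (F : T -> R) : (forall t, ~~ S t -> F t = 0) ->
    \sum_t F t = \sum_(t | S t) F t.
  by move=> F_out; rewrite (bigID S) /= [X in _ + X]big1 ?addr0.
have aS_sum1 : \sum_(t | S t) a t = 1 by rewrite -restrictS.
have weights_vanish : \sum_(t | S t) \sum_k c k t * (a t - g k) = 0.
  rewrite (eq_bigr (fun t => a t - \sum_k c k t * g k)) => [|t St]; last first.
    under eq_bigr do rewrite mulrBr.
    by rewrite sumrB -big_distrl /= c_col // mul1r.
  rewrite sumrB exchange_big /=.
  under [X in _ - X]eq_bigr do rewrite -big_distrl /= c_row mul1r.
  by rewrite aS_sum1 g_sum1 subrr.
rewrite -subr_ge0 !restrictS => [|t /a_out ->|t /a_out ->]; rewrite ?mul0r //.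
rewrite -sumrB -[X in X <= _]weights_vanish; apply: ler_sum => t St.
rewrite -[a t * ln (a t)]mul1r -(c_col t St) mulr_sumr !mulr_suml -sumrB.
by apply: ler_sum => k _; rewrite [a t * (_ * _)]mulrCA -mulrBr ler_wpM2l // sub_le_mul_lnB.
Qed.

End GibbsInequality.

Section Spectral.
Variable R : realType.
Local Notation C := R[i].
Local Notation diagR u := (diag_mx (\row_k ((u k)%:C%C : C))).

Lemma rtr_mulmxBr n (A B D : 'M[C]_n) : rtr (A *m (B - D)) = rtr (A *m B) - rtr (A *m D).
Proof. by rewrite mulmxBr /rtr !raddfB. Qed.

Lemma Re_realM (a : R) (z : C) : complex.Re (a%:C%C * z) = a * complex.Re z.
Proof. by case: z => x y /=; rewrite mul0r subr0. Qed.

Lemma mxtrace_sum (I : Type) (r : seq I) (Q : pred I) n (F : I -> 'M[C]_n) :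
  \tr (\sum_(i <- r | Q i) F i) = \sum_(i <- r | Q i) \tr (F i).
Proof. exact: raddf_sum. Qed.

Lemma Re_sum (I : Type) (r : seq I) (Q : pred I) (F : I -> C) :
  complex.Re (\sum_(i <- r | Q i) F i) = \sum_(i <- r | Q i) complex.Re (F i).
Proof. exact: raddf_sum. Qed.

Lemma Re_ge0 (z : C) : 0 <= z -> 0 <= complex.Re z.
Proof. by rewrite lecE => /andP[]. Qed.

Lemma rtr_sum (T : finType) n (A : 'M[C]_n) (a : T -> R) (X : T -> 'M[C]_n) :
  rtr (A *m \sum_t (a t)%:C%C *: X t) = \sum_t a t * rtr (A *m X t).
Proof.
rewrite /rtr mulmx_sumr mxtrace_sum Re_sum; apply: eq_bigr => t _.
by rewrite -scalemxAr mxtraceZ Re_realM.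
Qed.

Lemma mxfun_similar_diag n f (A W : 'M[C]_n) (d : 'rV[C]_n) :
  A \is normalmx -> W \in unitmx -> A = invmx W *m diag_mx d *m W ->
  mxfun f A = invmx W *m diag_mx (map_mx (fun z : C => (f (complex.Re z))%:C%C) d) *m W.
Proof.
move=> nA uW eA; apply: similar_diag_mx_map => //; first exact: spectral_unit.
by rewrite -eA; apply/esym/orthomx_spectralP.
Qed.

Lemma unitary_diag_normal n (V : 'M[C]_n) (d : 'rV[C]_n) : V \is unitarymx ->
  V^t* *m diag_mx d *m V \is normalmx.
Proof.
by move=> uV; apply/orthomx_spectral_subproof; exists (V, d); rewrite //= invmx_unitary.
Qed.

Lemma mxfun_unitary_diagR n f (V : 'M[C]_n) (u : 'I_n -> R) : V \is unitarymx ->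
  mxfun f (V^t* *m diagR u *m V) = V^t* *m diagR (fun k => f (u k)) *m V.
Proof.
move=> uV; rewrite (@mxfun_similar_diag n f _ V (\row_k (u k)%:C%C)).
- have -> : map_mx (fun z : C => (f (complex.Re z))%:C%C) (\row_k (u k)%:C%C) =
            \row_k (f (u k))%:C%C by apply/matrixP => i j; rewrite !mxE.
  by rewrite invmx_unitary.
- exact: unitary_diag_normal.
- exact: unitarymx_unit.
- by rewrite invmx_unitary.
Qed.

Lemma scale_diagR n (c : R) (u : 'I_n -> R) :
  c%:C%C *: diagR u = diagR (fun k => u k * c) :> 'M[C]_n.
Proof.
apply/matrixP => i j; rewrite !mxE.
by case: eqP => [->|]; rewrite ?mulr0n ?mulr1n ?mulr0 // mulrC rmorphM.
Qed.

Lemma mxtrace_unitary_diagR n (V : 'M[C]_n) (u : 'I_n -> R) : V \is unitarymx ->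
  \tr (V^t* *m diagR u *m V) = (\sum_k u k)%:C%C.
Proof.
move=> uV; rewrite mxtrace_mulC mulmxA (unitarymxP uV) mul1mx mxtrace_diag rmorph_sum.
by apply: eq_bigr => k _; rewrite mxE.
Qed.

Lemma rtr_unitary_diagR n (V : 'M[C]_n) (u : 'I_n -> R) : V \is unitarymx ->
  rtr (V^t* *m diagR u *m V) = \sum_k u k.
Proof. by move=> uV; rewrite /rtr mxtrace_unitary_diagR. Qed.

Lemma unitary_diagRM n (V : 'M[C]_n) (u w : 'I_n -> R) : V \is unitarymx ->
  V^t* *m diagR u *m V *m (V^t* *m diagR w *m V) =
  V^t* *m diagR (fun k => u k * w k) *m V.
Proof.
move=> uV.
have -> : V^t* *m diagR u *m V *m (V^t* *m diagR w *m V) =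
          V^t* *m (diagR u *m (V *m V^t*) *m diagR w) *m V by rewrite !mulmxA.
rewrite (unitarymxP uV) mulmx1 mul_diag_mx; congr (_ *m _ *m _).
apply/matrixP => i j; rewrite !mxE.
by case: eqP => [->|]; rewrite ?mulr0 ?mulr1n ?mulr0n // rmorphM.
Qed.

Lemma SvN_unitary_diagR n (V : 'M[C]_n) (u : 'I_n -> R) : V \is unitarymx ->
  SvN (V^t* *m diagR u *m V) = - \sum_k u k * ln (u k).
Proof.
by move=> uV; rewrite /SvN mxfun_unitary_diagR // unitary_diagRM // rtr_unitary_diagR.
Qed.

Lemma unitarymx_mulCV n (V : 'M[C]_n) : V \is unitarymx -> V^t* *m V = 1%:M.
Proof. by move=> uV; rewrite -invmx_unitary // mulVmx // unitarymx_unit. Qed.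

Lemma mulmx_unitaryCK m n (A : 'M[C]_(m, n)) (V : 'M[C]_n) : V \is unitarymx ->
  A *m V^t* *m V = A.
Proof. by move=> uV; rewrite -mulmxA unitarymx_mulCV // mulmx1. Qed.

Lemma normal_unitary_diag n (A : 'M[C]_n) : A \is normalmx ->
  A = (spectralmx A)^t* *m diag_mx (spectral_diag A) *m spectralmx A.
Proof. by move=> /orthomx_spectralP {1}->; rewrite invmx_unitary ?spectral_unitarymx. Qed.

Definition eigval n (A : 'M[C]_n) (k : 'I_n) : R := complex.Re (spectral_diag A 0 k).

Lemma hermitian_unitary_diagR n (A : 'M[C]_n) : A \is hermsymmx ->
  A = (spectralmx A)^t* *m diagR (eigval A) *m spectralmx A.
Proof.
move=> hA; have /mxOverP realA := hermitian_spectral_diag_real hA.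
rewrite {1}(normal_unitary_diag (hermitian_normalmx hA)).
have -> : spectral_diag A = \row_k (eigval A k)%:C%C.
  by apply/matrixP => i k; rewrite !mxE !ord1 /eigval RRe_real.
by [].
Qed.

Section Gibbs.
Variables (n : nat) (beta : R) (H : 'M[C]_n).
Hypotheses (n_gt0 : (0 < n)%N) (hermH : H \is hermsymmx).

Definition partition_fn : R := \sum_k expR (- (beta * eigval H k)).
Definition gibbs_weight (k : 'I_n) : R := expR (- (beta * eigval H k)) / partition_fn.

Lemma partition_fn_gt0 : 0 < partition_fn.
Proof.
rewrite /partition_fn; case: n n_gt0 H => // n' _ H'; rewrite big_ord_recl.
by rewrite ltr_pwDl ?expR_gt0 // sumr_ge0 // => k _; rewrite expR_ge0.
Qed.

Lemma gibbs_weight_gt0 k : 0 < gibbs_weight k.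
Proof. by rewrite divr_gt0 ?expR_gt0 ?partition_fn_gt0. Qed.

Lemma gibbs_weight_sum1 : \sum_k gibbs_weight k = 1.
Proof. by rewrite -mulr_suml divff // gt_eqF // partition_fn_gt0. Qed.

Lemma ln_gibbs_weight k : ln (gibbs_weight k) = - (beta * eigval H k) - ln partition_fn.
Proof. by rewrite ln_div ?posrE ?expR_gt0 ?partition_fn_gt0 // expRK. Qed.

Lemma gibbs_unitary_diagR :
  gibbs beta H = (spectralmx H)^t* *m diagR gibbs_weight *m spectralmx H.
Proof.
rewrite /gibbs /mexp_neg {1 2}(hermitian_unitary_diagR hermH).
rewrite !mxfun_unitary_diagR ?spectral_unitarymx //.
rewrite mxtrace_unitary_diagR ?spectral_unitarymx // -fmorphV scalemxAl scalemxAr.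
by rewrite scale_diagR.
Qed.

Lemma gibbs_energy : rtr (H *m gibbs beta H) = \sum_k eigval H k * gibbs_weight k.
Proof.
rewrite {1}(hermitian_unitary_diagR hermH) gibbs_unitary_diagR.
by rewrite unitary_diagRM ?rtr_unitary_diagR ?spectral_unitarymx.
Qed.

Lemma SvN_gibbs : SvN (gibbs beta H) = - \sum_k gibbs_weight k * ln (gibbs_weight k).
Proof. by rewrite gibbs_unitary_diagR SvN_unitary_diagR ?spectral_unitarymx. Qed.

Lemma SvN_gibbs_free_energy :
  SvN (gibbs beta H) = beta * rtr (H *m gibbs beta H) + ln partition_fn.
Proof.
rewrite SvN_gibbs gibbs_energy.
under eq_bigr => k _ do rewrite ln_gibbs_weight mulrBr.
rewrite sumrB -big_distrl /= gibbs_weight_sum1 mul1r mulr_sumr opprB -sumrN.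
by rewrite addrC; congr (_ + _); apply: eq_bigr => k _; ring.
Qed.

End Gibbs.

Lemma unitary_diag_sum_rank1 n (V : 'M[C]_n) (d : 'rV[C]_n) :
  V^t* *m diag_mx d *m V = \sum_j d 0 j *: ((row j V)^t* *m row j V).
Proof.
rewrite diag_mx_sum_delta mulmx_sumr mulmx_suml; apply: eq_bigr => j _.
rewrite -scalemxAr -scalemxAl; congr (_ *: _).
rewrite rowE trmx_mul map_mxM.
have -> : (delta_mx 0 j : 'rV[C]_n)^t* = delta_mx j 0.
  by apply/matrixP => a b; rewrite !mxE conjC_nat andbC.
by rewrite -(mul_delta_mx (0 : 'I_1)) !mulmxA.
Qed.

Lemma row_unitary_unit n (V : 'M[C]_n) j : V \is unitarymx ->
  row j V *m (row j V)^t* = 1%:M.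
Proof.
move=> uV; have := row_unitarymxP uV j j; rewrite dotmxE eqxx => e.
by apply/matrixP => a b; rewrite !ord1 e !mxE.
Qed.

Lemma unitary_rows_basis n (V : 'M[C]_n) : V \is unitarymx ->
  \sum_k (row k V)^t* *m row k V = 1%:M.
Proof.
move=> uV; have := unitary_diag_sum_rank1 V (const_mx 1).
rewrite diag_const_mx mulmx1 -[V^t*]mul1mx mulmxKtV // => ->.
by apply: eq_bigr => k _; rewrite mxE scale1r.
Qed.

Lemma rank1_mulmxC m n (x : 'rV[C]_n) (A : 'M[C]_(m, n)) :
  (x *m A^t*)^t* *m (x *m A^t*) = A *m (x^t* *m x) *m A^t*.
Proof. by rewrite trmx_mul map_mxM trmxCK !mulmxA. Qed.

Definition overlap n (V : 'M[C]_n) (x : 'rV[C]_n) (k : 'I_n) : R :=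
  complex.Re ((x *m V^t*) 0 k * ((x *m V^t*) 0 k)^*).

Lemma overlap_ge0 n (V : 'M[C]_n) x k : 0 <= overlap V x k.
Proof. exact/Re_ge0/mul_conjC_ge0. Qed.

Lemma overlap_sum1 n (V : 'M[C]_n) x : V \is unitarymx -> x *m x^t* = 1%:M ->
  \sum_k overlap V x k = 1.
Proof.
move=> uV ux.
have : \sum_k (x *m V^t*) 0 k * ((x *m V^t*) 0 k)^* = 1.
  transitivity ((x *m V^t* *m (x *m V^t*)^t*) 0 0).
    by rewrite !mxE; apply: eq_bigr => k _; rewrite !mxE.
  by rewrite trmx_mul map_mxM trmxCK mulmxA mulmxKtV // ux mxE.
by move=> e; rewrite /overlap -(raddf_sum (@complex.Re R)) e.
Qed.

Lemma overlap_sum_basis (T : finType) (S : pred T) n (V : 'M[C]_n) (x : T -> 'rV[C]_n) k :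
  V \is unitarymx -> \sum_(t | S t) (x t)^t* *m x t = 1%:M ->
  \sum_(t | S t) overlap V (x t) k = 1.
Proof.
move=> uV x_basis.
have : \sum_(t | S t) (x t *m V^t*) 0 k * ((x t *m V^t*) 0 k)^* = 1.
  transitivity ((V *m (\sum_(t | S t) (x t)^t* *m x t) *m V^t*) k k); last first.
    by rewrite x_basis mulmx1 (unitarymxP uV) mxE eqxx.
  rewrite mulmx_sumr mulmx_suml summxE; apply: eq_bigr => t _.
  by rewrite -rank1_mulmxC !mxE big_ord1 !mxE mulrC.
by move=> e; rewrite /overlap -(raddf_sum (@complex.Re R)) e.
Qed.

Lemma rtr_unitary_diagR_rank1 n (V : 'M[C]_n) (h : 'I_n -> R) (x : 'rV[C]_n) :
  rtr (V^t* *m diagR h *m V *m (x^t* *m x)) = \sum_k h k * overlap V x k.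
Proof.
rewrite /rtr mulmxA mxtrace_mulC trace_mx11.
have -> : x *m (V^t* *m diagR h *m V *m x^t*) =
          x *m V^t* *m diagR h *m (x *m V^t*)^t*.
  by rewrite trmx_mul map_mxM trmxCK !mulmxA.
rewrite /overlap; move: (x *m V^t*) => y.
rewrite mxE (raddf_sum (@complex.Re R)); apply: eq_bigr => k _.
by rewrite mul_mx_diag !mxE -Re_realM mulrAC mulrC.
Qed.

Section Mixture.
Variables (T : finType) (n : nat) (x : T -> 'rV[C]_n) (a : T -> R) (S : pred T).
Hypotheses (n_gt0 : (0 < n)%N) (a_ge0 : forall t, 0 <= a t)
  (a_out : forall t, ~~ S t -> a t = 0) (a_sum1 : \sum_t a t = 1)
  (x_unit : forall t, S t -> x t *m (x t)^t* = 1%:M)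
  (x_basis : \sum_(t | S t) (x t)^t* *m x t = 1%:M).

Lemma gibbs_variational beta H : H \is hermsymmx ->
  beta * rtr (H *m gibbs beta H) - SvN (gibbs beta H) <=
  beta * rtr (H *m \sum_t (a t)%:C%C *: ((x t)^t* *m x t)) + \sum_t a t * ln (a t).
Proof.
move=> hermH; set sigma := \sum_t _; set V := spectralmx H.
have uV : V \is unitarymx by exact: spectral_unitarymx.
have energy : rtr (H *m sigma) = \sum_t a t * \sum_k eigval H k * overlap V (x t) k.
  rewrite {1}(hermitian_unitary_diagR hermH) rtr_sum.
  by apply: eq_bigr => t _; rewrite rtr_unitary_diagR_rank1.
have cross : \sum_t a t * \sum_k overlap V (x t) k * ln (gibbs_weight beta H k) =
    - beta * rtr (H *m sigma) - ln (partition_fn beta H).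
  rewrite energy mulr_sumr -[ln _]mul1r -a_sum1 mulr_suml -sumrB.
  apply: eq_bigr => t _; have [St | /a_out ->] := boolP (S t); last first.
    by rewrite !mul0r mulr0 subr0.
  under eq_bigr do rewrite ln_gibbs_weight // mulrBr.
  rewrite sumrB -big_distrl /= overlap_sum1 ?x_unit // mul1r.
  have -> : \sum_k overlap V (x t) k * - (beta * eigval H k) =
            - beta * \sum_k eigval H k * overlap V (x t) k.
    by rewrite mulr_sumr; apply: eq_bigr => k _; ring.
  ring.
have := doubly_stochastic_gibbs_ineq (fun k t => overlap_ge0 V (x t) k) a_ge0 a_out
  (gibbs_weight_gt0 beta H n_gt0) (fun t St => overlap_sum1 uV (x_unit St))
  (fun k => overlap_sum_basis k uV x_basis) a_sum1 (gibbs_weight_sum1 beta H n_gt0).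
by rewrite cross (SvN_gibbs_free_energy beta n_gt0 hermH); lra.
Qed.

End Mixture.

Lemma gibbs_free_energy_le n (beta beta' : R) (H : 'M[C]_n) :
  (0 < n)%N -> H \is hermsymmx ->
  beta * rtr (H *m gibbs beta H) - SvN (gibbs beta H) <=
  beta * rtr (H *m gibbs beta' H) - SvN (gibbs beta' H).
Proof.
move=> n_gt0 hermH; set V := spectralmx H.
have uV : V \is unitarymx by exact: spectral_unitarymx.
have := gibbs_variational (x := fun k => row k V) (S := predT) n_gt0
  (fun k => ltW (gibbs_weight_gt0 beta' H n_gt0 k)) (fun k (nk : ~~ true) => ltac:(done))
  (gibbs_weight_sum1 beta' H n_gt0) (fun k _ => row_unitary_unit k uV)
  (unitary_rows_basis uV) beta hermH.
have -> : \sum_k (gibbs_weight beta' H k)%:C%C *: ((row k V)^t* *m row k V) = gibbs beta' H.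
  rewrite (gibbs_unitary_diagR beta' hermH) unitary_diag_sum_rank1.
  by apply: eq_bigr => k _; rewrite mxE.
move=> /le_trans; apply.
by rewrite (SvN_gibbs beta' hermH) opprK.
Qed.

Lemma gibbs_energy_le_of_SvN_le n (beta beta' : R) (H : 'M[C]_n) :
  (0 < n)%N -> H \is hermsymmx -> 0 < beta ->
  SvN (gibbs beta H) <= SvN (gibbs beta' H) ->
  rtr (H *m gibbs beta H) <= rtr (H *m gibbs beta' H).
Proof.
move=> n_gt0 hermH beta_gt0 SvN_le.
apply: le_trans (free_energy_le_shift beta_gt0 (gibbs_free_energy_le beta beta' n_gt0 hermH)).
by rewrite lerDl divr_ge0 ?subr_ge0 // ltW.
Qed.

Section Projector.
Variables (n : nat) (Q : 'M[C]_n).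
Hypotheses (hermQ : Q \is hermsymmx) (idemQ : Q *m Q = Q).
Local Notation V := (spectralmx Q).
Local Notation d := (spectral_diag Q).

Lemma proj_eigval01 j : d 0 j = ((d 0 j == 1) : nat)%:R.
Proof.
have uV : V \is unitarymx by exact: spectral_unitarymx.
have eD : diag_mx d = V *m (V^t* *m diag_mx d *m V) *m V^t*.
  by rewrite !mulmxA (unitarymxP uV) mul1mx mulmxtVK.
rewrite -(normal_unitary_diag (hermitian_normalmx hermQ)) in eD.
have dd : diag_mx d *m diag_mx d = diag_mx d.
  rewrite eD; have -> : V *m Q *m V^t* *m (V *m Q *m V^t*) =
                        V *m (Q *m (V^t* *m V) *m Q) *m V^t* by rewrite !mulmxA.
  by rewrite unitarymx_mulCV // mulmx1 idemQ.
move/matrixP: dd => /(_ j j); rewrite mul_diag_mx !mxE eqxx mulr1n => dj.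
have [-> | dj_neq1] := eqVneq (d 0 j) 1; first by [].
have : d 0 j * (d 0 j - 1) = 0 by rewrite mulrBr mulr1 dj subrr.
by move/eqP; rewrite mulf_eq0 subr_eq0 (negPf dj_neq1) orbF => /eqP ->.
Qed.

Lemma proj_sum_rank1 : Q = \sum_(j | d 0 j == 1) (row j V)^t* *m row j V.
Proof.
rewrite {1}(normal_unitary_diag (hermitian_normalmx hermQ)) unitary_diag_sum_rank1.
rewrite (bigID (fun j => d 0 j == 1)) /= [X in _ + X]big1 ?addr0.
  by apply: eq_bigr => j /eqP ->; rewrite scale1r.
by move=> j /negPf dj; rewrite proj_eigval01 dj scale0r.
Qed.

Lemma rtr_proj : rtr Q = \sum_j ((d 0 j == 1) : nat)%:R.
Proof.
have ed : d = \row_k (((d 0 k == 1) : nat)%:R : R)%:C%C.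
  by apply/matrixP => i k; rewrite !ord1 mxE rmorph_nat -proj_eigval01.
rewrite {1}(normal_unitary_diag (hermitian_normalmx hermQ)) {1}ed.
by rewrite rtr_unitary_diagR ?spectral_unitarymx.
Qed.
End Projector.

Lemma density_dim_gt0 n (rho : 'M[C]_n) : density rho -> (0 < n)%N.
Proof.
case: n rho => // rho [_ tr1 _]; move: tr1.
by rewrite /mxtrace big_ord0 => /eqP; rewrite eq_sym oner_eq0.
Qed.

Section CoarseGraining.
Variables (n m : nat) (P : 'I_m -> 'M[C]_n).
Hypothesis cgP : coarse_graining P.

Let P_herm i : P i \is hermsymmx. Proof. by case: cgP. Qed.
Let P_idem i : P i *m P i = P i. Proof. by case: cgP. Qed.
Let P_sum1 : \sum_i P i = 1%:M. Proof. by case: cgP. Qed.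

Local Notation occupied i j := (spectral_diag (P i) 0 j == 1).

Lemma Vol_gt0 i : 0 < Vol P i.
Proof.
have [_ _ P_neq0 _ _] := cgP.
rewrite /Vol rtr_proj // lt_def sumr_ge0 ?andbT; last by move=> j _; exact: ler0n.
apply/eqP => /psumr_eq0P Vol0; move/eqP: (P_neq0 i); apply.
rewrite (proj_sum_rank1 (P_herm i) (P_idem i)) big1 // => j occ.
by have := Vol0 (fun k _ => ler0n _ _) j isT; rewrite occ /= => /eqP; rewrite oner_eq0.
Qed.

Lemma prob_ge0 rho : density rho -> forall i, 0 <= prob P rho i.
Proof.
case=> _ _ rho_psd i; rewrite /prob /rtr (proj_sum_rank1 (P_herm i) (P_idem i)).
rewrite mulmx_suml mxtrace_sum Re_sum sumr_ge0 // => j _.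
by rewrite -mulmxA mxtrace_mulC trace_mx11 Re_ge0.
Qed.

Lemma prob_sum1 rho : density rho -> \sum_i prob P rho i = 1.
Proof.
case=> _ tr1 _.
by rewrite /prob /rtr -Re_sum -mxtrace_sum -mulmx_suml P_sum1 mul1mx tr1.
Qed.

Lemma sum_occupied (F : 'I_m -> R) :
  \sum_(t : 'I_m * 'I_n) (if occupied t.1 t.2 then F t.1 else 0) = \sum_i Vol P i * F i.
Proof.
rewrite sum_pair; apply: eq_bigr => i _ /=.
rewrite /Vol rtr_proj // mulr_suml; apply: eq_bigr => j _.
by case: ifP; rewrite ?mul1r ?mul0r.
Qed.

Variables (U : 'M[C]_n) (w : 'I_m -> R).
Hypotheses (uU : U \is unitarymx) (w_ge0 : forall i, 0 <= w i).

Local Notation eigvec t := (row t.2 (spectralmx (P t.1)) *m U^t*).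
(* U (sum_i w_i / V_i P_i) U^+ is diagonal in the pooled, rotated eigenbases
   of the P i: the vectors are indexed by pairs (i, j) with j an eigenvector of
   P i for the eigenvalue 1, and carry the weight w_i / V_i. *)
Let weight (t : 'I_m * 'I_n) : R := if occupied t.1 t.2 then w t.1 / Vol P t.1 else 0.

Lemma coarse_eigvec_unit t : eigvec t *m (eigvec t)^t* = 1%:M.
Proof.
rewrite trmx_mul map_mxM trmxCK mulmxA (mulmx_unitaryCK _ uU).
exact/row_unitary_unit/spectral_unitarymx.
Qed.

Lemma coarse_eigvec_basis : \sum_(t | occupied t.1 t.2) (eigvec t)^t* *m eigvec t = 1%:M.
Proof.
rewrite (sum_pair_cond (fun i j => occupied i j) (fun t => (eigvec t)^t* *m eigvec t)) /=.
under eq_bigr => i _ do under eq_bigr => j _ do rewrite rank1_mulmxC.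
under eq_bigr => i _ do rewrite -mulmx_suml -mulmx_sumr -(proj_sum_rank1 (P_herm i) (P_idem i)).
by rewrite -mulmx_suml -mulmx_sumr P_sum1 mulmx1 (unitarymxP uU).
Qed.

Lemma coarse_weight_ge0 t : 0 <= weight t.
Proof. by rewrite /weight; case: ifP => // _; rewrite divr_ge0 // ltW // Vol_gt0. Qed.

Lemma coarse_weight_out t : ~~ occupied t.1 t.2 -> weight t = 0.
Proof. by rewrite /weight => /negPf ->. Qed.

Lemma coarse_weight_sum1 : \sum_i w i = 1 -> \sum_t weight t = 1.
Proof.
move=> <-; rewrite /weight (sum_occupied (fun i => w i / Vol P i)).
by apply: eq_bigr => i _; rewrite mulrCA divff ?mulr1 // gt_eqF // Vol_gt0.
Qed.

Lemma coarse_weight_entropy :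
  \sum_t weight t * ln (weight t) = \sum_i w i * ln (w i / Vol P i).
Proof.
rewrite (eq_bigr (fun t => if occupied t.1 t.2
    then w t.1 / Vol P t.1 * ln (w t.1 / Vol P t.1) else 0)) => [|t _]; last first.
  by rewrite /weight; case: ifP; rewrite ?mul0r.
rewrite (sum_occupied (fun i => w i / Vol P i * ln (w i / Vol P i))); apply: eq_bigr => i _.
by rewrite mulrA mulrCA divff ?mulr1 // gt_eqF // Vol_gt0.
Qed.

Lemma coarse_state_mixture :
  U *m (\sum_i (w i / Vol P i)%:C%C *: P i) *m U^t* =
  \sum_t (weight t)%:C%C *: ((eigvec t)^t* *m eigvec t).
Proof.
rewrite sum_pair mulmx_sumr mulmx_suml; apply: eq_bigr => i _.
rewrite {1}(proj_sum_rank1 (P_herm i) (P_idem i)) scaler_sumr mulmx_sumr mulmx_suml.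
rewrite [RHS](bigID (fun j => occupied i j)) /= [X in _ = _ + X]big1 ?addr0.
  apply: eq_bigr => j occ; rewrite rank1_mulmxC /weight /= occ.
  by rewrite -scalemxAr -scalemxAl.
by move=> j /negPf unocc; rewrite /weight /= unocc scale0r.
Qed.

Lemma coarse_free_energy_le beta H : (0 < n)%N -> H \is hermsymmx -> \sum_i w i = 1 ->
  beta * rtr (H *m gibbs beta H) - SvN (gibbs beta H) <=
  beta * rtr (H *m (U *m (\sum_i (w i / Vol P i)%:C%C *: P i) *m U^t*))
  + \sum_i w i * ln (w i / Vol P i).
Proof.
move=> n_gt0 hermH w_sum1; rewrite coarse_state_mixture -coarse_weight_entropy.
exact: (gibbs_variational (x := fun t => eigvec t) (S := fun t => occupied t.1 t.2)
  n_gt0 coarse_weight_ge0 coarse_weight_out (coarse_weight_sum1 w_sum1)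
  (fun t _ => coarse_eigvec_unit t) coarse_eigvec_basis beta hermH).
Qed.

End CoarseGraining.

Section MinUnitary.
Local Open Scope classical_set_scope.
Variables (n : nat) (H A : 'M[C]_n) (L : R).
Hypothesis L_lb : forall U, U \is unitarymx -> L <= rtr (H *m (U *m A *m U^t*)).

Lemma min_unitary_ge : L <= min_unitary H A.
Proof.
have u1 : (1%:M : 'M[C]_n) \is unitarymx.
  by apply/unitarymxP; rewrite trmx1 map_mx1 mulmx1.
apply: lb_le_inf; first by exists (rtr (H *m (1%:M *m A *m (1%:M)^t*))), 1%:M.
by move=> y [U [uU ->]]; exact: L_lb.
Qed.

Lemma min_unitary_le U : U \is unitarymx -> min_unitary H A <= rtr (H *m (U *m A *m U^t*)).
Proof.
move=> uU; apply: ge_inf; last by exists U.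
by exists L => y [V [uV ->]]; exact: L_lb.
Qed.

End MinUnitary.

Section Ergotropies.
Variables (n m : nat) (H : 'M[C]_n) (P : 'I_m -> 'M[C]_n) (rho : 'M[C]_n).
Hypotheses (n_gt0 : (0 < n)%N) (hermH : H \is hermsymmx) (cgP : coarse_graining P)
  (rho_dens : density rho).
Local Notation p := (prob P rho).
Local Notation cell i := ((Vol P i)^-1%:C%C *: P i).

Lemma cell_energy_ge beta i U : 0 < beta -> U \is unitarymx ->
  rtr (H *m gibbs beta H) + (ln (Vol P i) - SvN (gibbs beta H)) / beta <=
  rtr (H *m (U *m cell i *m U^t*)).
Proof.
move=> beta_gt0 uU; apply: (free_energy_le_shift beta_gt0).
have delta_sum1 : \sum_j ((j == i) : nat)%:R = 1 :> R.
  by rewrite (bigD1 i) //= eqxx big1 ?addr0 // => j /negPf ->.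
have := coarse_free_energy_le cgP uU (fun j => ler0n _ _) beta n_gt0 hermH delta_sum1.
rewrite (bigD1 i) //= [X in _ *: P i + X]big1 => [|j /negPf ->]; last first.
  by rewrite mul0r scale0r.
rewrite (bigD1 i) //= [X in _ * ln _ + X]big1 => [|j /negPf ->]; last by rewrite mul0r.
by rewrite eqxx !mul1r !addr0 lnV ?posrE ?Vol_gt0.
Qed.

Lemma gibbs_energy_le_boltzmann beta : 0 < beta ->
  SvN (gibbs beta H) <= \sum_i p i * ln (Vol P i) ->
  rtr (H *m gibbs beta H) <= \sum_i p i * min_unitary H (cell i).
Proof.
move=> beta_gt0 SvN_le.
apply: le_trans (_ : \sum_i p i * (rtr (H *m gibbs beta H)
    + (ln (Vol P i) - SvN (gibbs beta H)) / beta) <= _).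
  by rewrite sum_convex_shift ?prob_sum1 // lerDl divr_ge0 ?subr_ge0 // ltW.
apply: ler_sum => i _; apply: ler_wpM2l; first exact: prob_ge0.
by apply: min_unitary_ge => U uU; exact: cell_energy_ge.
Qed.

Lemma gibbs_energy_le_observational beta : 0 < beta ->
  SvN (gibbs beta H) <= - \sum_i p i * ln (p i / Vol P i) ->
  rtr (H *m gibbs beta H) <= min_unitary H (rho_cg P rho).
Proof.
move=> beta_gt0 SvN_le; apply: min_unitary_ge => U uU.
have := coarse_free_energy_le cgP uU (prob_ge0 cgP rho_dens) beta n_gt0 hermH
  (prob_sum1 cgP rho_dens).
rewrite -[X in _ <= _ + X]opprK => /(free_energy_le_shift beta_gt0); apply: le_trans.
by rewrite lerDl divr_ge0 ?subr_ge0 // ltW.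
Qed.

Lemma boltzmann_le_observational :
  \sum_i p i * min_unitary H (cell i) <= min_unitary H (rho_cg P rho).
Proof.
apply: min_unitary_ge => U uU.
have -> : U *m rho_cg P rho *m U^t* = \sum_i (p i)%:C%C *: (U *m cell i *m U^t*).
  rewrite /rho_cg mulmx_sumr mulmx_suml; apply: eq_bigr => i _.
  by rewrite rmorphM -scalerA -!scalemxAr -!scalemxAl.
rewrite rtr_sum; apply: ler_sum => i _; apply: ler_wpM2l; first exact: prob_ge0.
(* [min_unitary] is an infimum, so it needs a lower bound: the Gibbs bound at
   inverse temperature 1 provides one. *)
exact: (min_unitary_le (fun V uV => @cell_energy_ge 1 i V ltr01 uV) uU).
Qed.

End Ergotropies.

End Spectral.

Theorem mainTheorem10 (R : realType) (n m : nat) (H : 'M[R[i]]_n)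
  (P : 'I_m -> 'M[R[i]]_n) (rho : 'M[R[i]]_n) (beta beta' : R) :
  H \is hermsymmx ->
  coarse_graining P ->
  density rho ->
  0 < beta ->
  0 < beta' ->
  SvN (gibbs beta H) = \sum_(i < m) prob P rho i * ln (Vol P i) ->
  SvN (gibbs beta' H) =
    - (\sum_(i < m) prob P rho i * ln (prob P rho i))
    + \sum_(i < m) prob P rho i * ln (Vol P i) ->
  (W_obs H P rho <= W_B H P rho /\ W_B H P rho <= W_Binf H beta rho) /\
  (W_obs H P rho <= W_inf H beta' rho /\ W_inf H beta' rho <= W_Binf H beta rho).
Proof.
move=> hermH cgP rho_dens beta_gt0 beta'_gt0 SvN_beta SvN_beta'.
have n_gt0 := density_dim_gt0 rho_dens.
have p_ge0 := prob_ge0 cgP rho_dens; have p_sum1 := prob_sum1 cgP rho_dens.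
have SvN_beta_le : SvN (gibbs beta H) <= \sum_i prob P rho i * ln (Vol P i).
  by rewrite SvN_beta lexx.
have E_le_B := gibbs_energy_le_boltzmann n_gt0 hermH cgP rho_dens beta_gt0 SvN_beta_le.
have E'_le_obs : rtr (H *m gibbs beta' H) <= min_unitary H (rho_cg P rho).
  apply: (gibbs_energy_le_observational n_gt0 hermH cgP rho_dens beta'_gt0).
  by rewrite SvN_beta' (sum_mul_ln_div p_ge0 (Vol_gt0 cgP)) opprB addrC lexx.
have B_le_obs := boltzmann_le_observational n_gt0 hermH cgP rho_dens.
have E_le_E' : rtr (H *m gibbs beta H) <= rtr (H *m gibbs beta' H).
  apply: gibbs_energy_le_of_SvN_le n_gt0 hermH beta_gt0 _.
  by rewrite [X in X <= _]SvN_beta [X in _ <= X]SvN_beta' lerDr oppr_ge0 sum_mul_ln_le0.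
have W_Binf_sub : W_Binf H beta rho = rtr (H *m rho) - rtr (H *m gibbs beta H).
  exact: rtr_mulmxBr.
have W_inf_sub : W_inf H beta' rho = rtr (H *m rho) - rtr (H *m gibbs beta' H).
  exact: rtr_mulmxBr.
rewrite W_Binf_sub W_inf_sub.
split; split.
- exact: lerB (lexx _) B_le_obs.
- exact: lerB (lexx _) E_le_B.
- exact: lerB (lexx _) E'_le_obs.
- exact: lerB (lexx _) E_le_E'.
Qed.
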